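(* In the setting of the context, for $1\le i\le 2n$ let $A_1(i,c)$ be the area of the polygon with vertices $P_i,P_{i+1},\dots,P_{i+n}$ and $A_2(i,c)$ the area of the polygon with vertices $P_{i+n},P_{i+n+1},\dots,P_{i}$ (the two parts into which the diagonal $P_iP_{i+n}$ cuts $P$). Then $$A_1(i,c)-A_2(i,c)=4c\beta_i,\qquad 1\le i\le 2n.$$
   Context: $[x,y]$ denotes the determinant of the matrix with columns $x,y\in\mathbb{R}^2$. Fix $n\ge2$; indices (integer and half-integer) are read modulo $2n$. $U$ is a convex $2n$-gon with distinct vertices $U_1,\dots,U_{2n}$ in counterclockwise order with $U_{i+n}=-U_i$. Let $c>0$ and let $P$ be a convex polygon with nonempty interior and vertex list $P_1,\dots,P_{2n}$ (listed counterclockwise, consecutive entries may coincide) with $P_{i+1}-P_i$ a nonnegative multiple of $U_{i+1}-U_i$ and $P_i-P_{i+n}=2cU_i$ for all $i$. Let $M_i=\frac12(P_i+P_{i+n})$ (so $P_i=M_i+cU_i$), define $\alpha_{i+\frac12}$ by $M_{i+1}-M_i=\alpha_{i+\frac12}(U_{i+1}-U_i)$, and set $\beta_i=\frac12\sum_{j=i}^{i+n-1}\alpha_{j+\frac12}[U_j,U_{j+1}]$. *)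

From mathcomp Require Import all_boot all_order all_algebra.
Set Implicit Arguments. Unset Strict Implicit. Unset Printing Implicit Defensive.
Import Order.TTheory GRing.Theory Num.Theory.
Local Open Scope ring_scope.

(* Points of R^2 as pairs; [x,y] is the determinant with columns x,y. *)
Definition pt (R : realFieldType) := (R * R)%type.

Section Plane.
Variable R : realFieldType.
Definition padd (x y : pt R) : pt R := (x.1 + y.1, x.2 + y.2).
Definition psub (x y : pt R) : pt R := (x.1 - y.1, x.2 - y.2).
Definition popp (x : pt R) : pt R := (- x.1, - x.2).
Definition pscale (a : R) (x : pt R) : pt R := (a * x.1, a * x.2).
Definition det2 (x y : pt R) : R := x.1 * y.2 - x.2 * y.1.

(* Shoelace (signed) area of the closed polygon with vertex list s
   (the last vertex is joined back to the first). For a convex polygon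
   listed counterclockwise this is its area. *)
Definition poly_area (s : seq (pt R)) : R :=
  2^-1 * \sum_(k < size s)
     det2 (nth (0, 0) s k) (nth (0, 0) s ((k.+1) %% size s)).

Definition midpt (n : nat) (P : nat -> pt R) (i : nat) : pt R :=
  pscale 2^-1 (padd (P i) (P (i + n)%N)).

(* beta_i = 1/2 sum_{j=i}^{i+n-1} alpha_{j+1/2} [U_j, U_{j+1}],
   where alpha j stands for alpha_{j+1/2}. *)
Definition beta (n : nat) (U : nat -> pt R) (alpha : nat -> R) (i : nat) : R :=
  2^-1 * \sum_(i <= j < i + n) alpha j * det2 (U j) (U j.+1).

Definition vlist (P : nat -> pt R) (a m : nat) : seq (pt R) :=
  [seq P k | k <- iota a m.+1].
End Plane.

From mathcomp Require Import all_boot all_order all_algebra ring.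
Set Implicit Arguments. Unset Strict Implicit. Unset Printing Implicit Defensive.
Import Order.TTheory GRing.Theory Num.Theory.
Local Open Scope ring_scope.

(* Proof: cut the shoelace sums of the two halves into edge terms.  Since
   P_k - P_{k+n} = 2c U_k, the edge [P_k, P_{k+1}] and the opposite edge
   [P_{k+n}, P_{k+n+1}] differ by 4c alpha_{k+1/2} [U_k, U_{k+1}] plus a
   telescoping term 2c ([P_{k+1}, U_{k+1}] - [P_k, U_k]).  Summing over one
   half leaves 8c beta_i plus boundary terms, which cancel against the
   contribution of the diagonal P_i P_{i+n} by the central symmetry of U. *)

Section ChordIdentities.
Variable R : realFieldType.
Implicit Types (p q u : pt R) (c : R).

Lemma chord_endpoint p q u c :
  psub p q = pscale (2 * c) u -> q = psub p (pscale (2 * c) u).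
Proof.
by move: p q => [p1 p2] [q1 q2]; rewrite /psub /pscale /= => -[<- <-]; congr pair; ring.
Qed.

Lemma det2_chord_opp p q u c :
  psub p q = pscale (2 * c) u -> det2 q (popp u) = - det2 p u.
Proof.
by move/chord_endpoint->; move: p u => [p1 p2] [u1 u2]; rewrite /det2 /=; ring.
Qed.

Lemma det2_chord_swap p q u c :
  psub p q = pscale (2 * c) u -> det2 q p - det2 p q = 4 * c * det2 p u.
Proof.
by move/chord_endpoint->; move: p u => [p1 p2] [u1 u2]; rewrite /det2 /=; ring.
Qed.

Lemma det2_opposite_edges (p p' q q' u u' : pt R) c a :
    psub p q = pscale (2 * c) u -> psub p' q' = pscale (2 * c) u' ->
    psub (pscale 2^-1 (padd p' q')) (pscale 2^-1 (padd p q)) =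
      pscale a (psub u' u) ->
  det2 p p' - det2 q q' =
    2 * c * (det2 p' u' - det2 p u) + 4 * c * a * det2 u u'.
Proof.
move=> /chord_endpoint-> /chord_endpoint->.
move: p p' u u' => [p1 p2] [p1' p2'] [u1 u2] [u1' u2'].
rewrite /psub /pscale /padd /det2 /=; case=> m1 m2.
have -> : p1' = p1 + (c + a) * (u1' - u1) by rewrite mulrDl -m1; field.
have -> : p2' = p2 + (c + a) * (u2' - u2) by rewrite mulrDl -m2; field.
ring.
Qed.

End ChordIdentities.

Lemma poly_area_vlist (R : realFieldType) (P : nat -> pt R) (a m : nat) :
  poly_area (vlist P a m) =
  2^-1 * (\sum_(a <= k < a + m) det2 (P k) (P k.+1) + det2 (P (a + m)%N) (P a)).
Proof.
have -> : \sum_(a <= k < a + m) det2 (P k) (P k.+1) =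
          \sum_(k < m) det2 (P (a + k)%N) (P (a + k).+1).
  by rewrite -{1}[a]add0n big_addn addKn big_mkord; apply: eq_bigr => k; rewrite addnC.
rewrite /poly_area /vlist size_map size_iota big_ord_recr.
congr (_ * (_ + _)); last by rewrite modnn !(nth_map 0%N) ?size_iota ?nth_iota ?addn0.
apply: eq_bigr => k _.
have k1_lt : (k.+1 < m.+1)%N by rewrite ltnS.
rewrite (modn_small k1_lt) !(nth_map 0%N) ?size_iota //.
by rewrite !nth_iota // addnS.
Qed.

Section HalfPerimeter.
Variables (R : realFieldType) (n : nat) (U P : nat -> pt R) (c : R).
Variable alpha : nat -> R.
Hypothesis chordP : forall k, psub (P k) (P (k + n)%N) = pscale (2 * c) (U k).
Hypothesis midptP : forall k,
  psub (midpt n P k.+1) (midpt n P k) = pscale (alpha k) (psub (U k.+1) (U k)).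

Lemma sum_det2_opposite_half i :
  \sum_(i <= k < i + n) det2 (P k) (P k.+1)
  - \sum_(i <= k < i + n) det2 (P (k + n)%N) (P (k + n).+1) =
  2 * c * (det2 (P (i + n)%N) (U (i + n)%N) - det2 (P i) (U i))
  + 8 * c * beta n U alpha i.
Proof.
rewrite -sumrB.
under eq_bigr => k _.
  rewrite -addSn (det2_opposite_edges (chordP k) (chordP k.+1) (midptP k)).
  over.
rewrite big_split /= -mulr_sumr telescope_sumr ?leq_addr //; congr (_ + _).
under eq_bigr do rewrite -mulrA.
by rewrite -mulr_sumr /beta; field.
Qed.

End HalfPerimeter.

Theorem proposition3p4 (R : realFieldType) (n : nat) (U P : nat -> pt R)
    (c : R) (alpha : nat -> R) :
  (2 <= n)%N ->
  (forall i, U (i + 2 * n)%N = U i) ->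
  (forall i, U (i + n)%N = popp (U i)) ->
  (forall i j, (i < j < 2 * n)%N -> U i != U j) ->
  (forall i k, (1 < k < 2 * n)%N ->
     0 < det2 (psub (U i.+1) (U i)) (psub (U (i + k)%N) (U i))) ->
  0 < c ->
  (forall i, P (i + 2 * n)%N = P i) ->
  (forall i k, 0 <= det2 (psub (P i.+1) (P i)) (psub (P (i + k)%N) (P i))) ->
  (exists i j k, det2 (psub (P j) (P i)) (psub (P k) (P i)) != 0) ->
  (forall i, exists t, 0 <= t /\ psub (P i.+1) (P i) = pscale t (psub (U i.+1) (U i))) ->
  (forall i, psub (P i) (P (i + n)%N) = pscale (2 * c) (U i)) ->
  (forall i, psub (midpt n P i.+1) (midpt n P i) = pscale (alpha i) (psub (U i.+1) (U i))) ->
  forall i, (1 <= i <= 2 * n)%N ->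
    poly_area (vlist P i n) - poly_area (vlist P (i + n) n) = 4 * c * beta n U alpha i.
Proof.
move=> _ _ Usym _ _ _ Pper _ _ _ chordP midptP i _.
rewrite !poly_area_vlist.
have -> : P (i + n + n)%N = P i by rewrite -addnA addnn -mul2n Pper.
rewrite big_addn addnK.
have half := sum_det2_opposite_half chordP midptP i.
have diag := det2_chord_swap (chordP i).
have antipode : det2 (P (i + n)%N) (U (i + n)%N) = - det2 (P i) (U i).
  by rewrite Usym; exact: det2_chord_opp (chordP i).
move: half diag; rewrite antipode.
set S := \sum_(_ <= _ < _) _; set S' := \sum_(_ <= _ < _) _ => half diag.
by rewrite -mulrBr opprD addrACA half diag; field.
Qed.
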